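(* Let $k\ge 1$, let $\mathcal{F} \subset \binom{[n]}{k}$ with $|\mathcal{F}|=m$, let $0 < \epsilon \leq \frac{1}{2}$ and suppose $n>2 \log \frac{1}{\epsilon}+k$. Suppose that $\beta(\mathcal{F}) \leq (1-\theta)m(n-k)$ for some $0 < \theta \leq 1$. Then there exists a subfamily $S \subset \mathcal{F}$ such that $$|\Gamma(S)| \geq (1-\epsilon) \theta m \quad\text{and}\quad |S| < \Big(20\log\tfrac{1}{\epsilon}\Big) \cdot \frac{m}{n-k} +2\log\frac{1}{\epsilon \theta}.$$
   Context: $\log$ is the natural logarithm. For $\sigma\in\mathcal{F}$, $\beta_{\mathcal{F}}(\sigma)=|\{\tau\in\binom{[n]}{k+1}: \binom{\tau}{k}\cap\mathcal{F}=\{\sigma\}\}|$ (the number of $(k+1)$-sets containing $\sigma$ and no other member of $\mathcal{F}$), and $\beta(\mathcal{F})=\sum_{\sigma\in\mathcal{F}}\beta_{\mathcal{F}}(\sigma)$. For $S\subset\mathcal{F}$, $\Gamma(S)=\{\eta\in\mathcal{F}: |\eta\cap\sigma|=k-1 \text{ for some } \sigma\in S\}$. *)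

From mathcomp Require Import all_boot all_order all_algebra.
From mathcomp Require Import all_classical all_reals all_analysis.
Set Implicit Arguments. Unset Strict Implicit. Unset Printing Implicit Defensive.

(* beta_F(sigma): number of (k+1)-sets tau containing sigma and no other member
   of F, i.e. the k-subsets of tau lying in F are exactly {sigma}. *)
Definition beta_at (n k : nat) (F : {set {set 'I_n}}) (sigma : {set 'I_n}) : nat :=
  #|[set tau : {set 'I_n} | (#|tau| == k.+1) &&
      ([set eta in F | (eta \subset tau) && (#|eta| == k)] == [set sigma])]|.

Definition beta (n k : nat) (F : {set {set 'I_n}}) : nat :=
  \sum_(sigma in F) beta_at k F sigma.

Definition Gamma (n k : nat) (F S : {set {set 'I_n}}) : {set {set 'I_n}} :=
  [set eta in F | [exists sigma in S, #|eta :&: sigma| == k.-1]].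

(* Adjoining a point x outside eta in F gives a (k+1)-set that either counts
   towards beta_F(eta) or contains a second member of F, which is then adjacent
   to eta and contains x; so eta has at least n - k - beta_F(eta) neighbours in F.
   Pick s ~ (m / (n - k)) log(1/eps) members of F uniformly at random: eta is
   missed with probability (1 - d(eta)/m)^s, which by convexity of t |-> t^s is
   at most 1 - (1 - eps) (n - k - beta_F(eta)) / (n - k).  Summing over eta and
   using beta(F) <= (1 - theta) m (n - k), the expected size of Gamma(S) is at
   least (1 - eps) theta m, and the method of conditional expectations turns the
   random choice into a deterministic one. *)

From mathcomp Require Import all_boot all_order all_algebra.
From mathcomp Require Import all_classical all_reals all_analysis.
From mathcomp Require Import zify ring lra.
(* Re-imported so that the finset lemmas shadow their classical_sets namesakes. *)
From mathcomp Require Import fintype finset.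
Import Order.TTheory GRing.Theory Num.Theory.
Set Implicit Arguments. Unset Strict Implicit. Unset Printing Implicit Defensive.
Local Open Scope ring_scope.

Lemma exprn_convex_le (R : realDomainType) (t a : R) s :
  0 <= t <= 1 -> 0 <= a <= 1 -> (1 - t + t * a) ^+ s <= 1 - t + t * a ^+ s.
Proof.
move=> /andP[t0 t1] /andP[a0 a1]; elim: s => [|s IH]; first by rewrite !expr0; lra.
have as0 : 0 <= a ^+ s by apply: exprn_ge0.
have as1 : a ^+ s <= 1 by apply: exprn_ile1.
rewrite exprS [a ^+ s.+1]exprS.
apply: (le_trans (ler_wpM2l _ IH)); first by have := mulr_ge0 t0 a0; lra.
(* The gap between the two sides is exactly this product. *)
have : 0 <= t * (1 - t) * ((1 - a) * (1 - a ^+ s)) by rewrite !mulr_ge0 // ?subr_ge0.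
nra.
Qed.

Lemma exprn_le_one_sub (R : realType) (t y c eps : R) s :
  0 <= t <= 1 -> 0 <= y -> 0 <= c <= 1 - t * y -> expR (- (s%:R * y)) <= eps ->
  c ^+ s <= 1 - (1 - eps) * t.
Proof.
move=> /andP[t0 t1] y0 /andP[c0 c_le] exp_le.
set a := expR (- y).
have a0 : 0 <= a by rewrite expR_ge0.
have a1 : a <= 1 by rewrite expR_le1 oppr_le0.
have c_le_mix : c <= 1 - t + t * a.
  have : 1 - y <= a by have := expR_ge1Dx (- y); rewrite -/a; lra.
  by rewrite -subr_ge0 => /(mulr_ge0 t0); lra.
have as_le : a ^+ s <= eps by rewrite -expRM_natl mulrN.
apply: (le_trans (lerXn2r s _ _ c_le_mix)); rewrite ?nnegrE //; first by nra.
apply: (le_trans (exprn_convex_le s _ _)); rewrite ?t0 ?t1 ?a0 ?a1 //.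
nra.
Qed.

Lemma ln_inv_ge_half (R : realType) (y : R) : 0 < y -> y <= 1 / 2 -> 1 / 2 <= ln (1 / y).
Proof.
move=> y_gt0 y_le; have := expR_ge1Dx (- ln (1 / y)).
by rewrite expRN lnK ?posrE ?divr_gt0 // invf_div divr1; lra.
Qed.

Lemma expRN_le (R : realType) (eps z : R) :
  0 < eps -> ln (1 / eps) <= z -> expR (- z) <= eps.
Proof.
move=> eps_gt0 ln_le; rewrite -[leRHS]lnK ?posrE // ler_expR.
by rewrite div1r lnV ?posrE // in ln_le; rewrite lerNl.
Qed.

Lemma exists_le_mean (R : realDomainType) (I : finType) (A : {set I}) (f : I -> R) (a : R) :
  (0 < #|A|)%N -> \sum_(i in A) f i <= #|A|%:R * a -> exists2 i, i \in A & f i <= a.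
Proof.
move=> A0 sum_le; apply/exists_inP; apply: contraLR sum_le => /exists_inPn lt_a.
rewrite -ltNge mulr_natl -sumr_const; apply: ltr_sum => [|i iA].
  by have [i iA] := card_gt0P A0; apply/hasP; exists i; rewrite ?mem_index_enum.
by rewrite ltNge lt_a.
Qed.

Section RandomGreedyCover.
Variables (R : realType) (T : finType) (adj : rel T) (F : {set T}).

Definition nbhd (eta : T) : {set T} := [set sigma in F | adj eta sigma].

Definition covered (S : {set T}) : {set T} :=
  [set eta in F | [exists sigma in S, adj eta sigma]].

Definition miss_prob (eta : T) : R := 1 - #|nbhd eta|%:R / #|F|%:R.

(* [uncovered_weight S r] is the expected number of members of [F] covered
   neither by [S] nor by [r] independent uniform picks from [F]. *)
Definition uncovered_weight (S : {set T}) (r : nat) : R :=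
  \sum_(eta in F :\: covered S) miss_prob eta ^+ r.

Lemma covered_sub S : covered S \subset F.
Proof. by apply/subsetP => eta; rewrite inE => /andP[]. Qed.

Lemma setD_covered_setU1 s S :
  F :\: covered (s |: S) = [set eta in F :\: covered S | ~~ adj eta s].
Proof.
apply/setP => eta; rewrite !inE.
have -> : [exists sigma in s |: S, adj eta sigma]
          = adj eta s || [exists sigma in S, adj eta sigma].
  apply/exists_inP/orP => [[sigma /setU1P[->|sS] adj_sigma]|
                           [adj_s|/exists_inP[sigma sS adj_sigma]]].
  - by left.
  - by right; apply/exists_inP; exists sigma.
  - by exists s; rewrite ?setU11.
  - by exists sigma; rewrite ?setU1r.
by case: (eta \in F); case: (adj eta s); rewrite /= ?andbT ?andbF.
Qed.

Lemma sum_non_nbhd eta (c : R) :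
  \sum_(s in F | ~~ adj eta s) c = #|F|%:R * miss_prob eta * c.
Proof.
have [F0|F_gt0] := posnP #|F|.
  by rewrite F0 mul0r mul0r big_pred0 // => s; rewrite (card0_eq F0).
have nbhdE : \sum_(s in F | adj eta s) c = #|nbhd eta|%:R * c.
  by rewrite mulr_natl -sumr_const; apply: eq_bigl => s; rewrite inE.
have splitF :
    \sum_(s in F) c = \sum_(s in F | adj eta s) c + \sum_(s in F | ~~ adj eta s) c.
  exact: bigID.
move: splitF; rewrite nbhdE sumr_const -[c *+ _]mulr_natl /miss_prob => splitF.
apply/(addrI (#|nbhd eta|%:R * c)); rewrite -splitF; field.
by rewrite pnatr_eq0 -lt0n.
Qed.

Lemma sum_uncovered_weight_setU1 S r :
  \sum_(s in F) uncovered_weight (s |: S) r = #|F|%:R * uncovered_weight S r.+1.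
Proof.
rewrite /uncovered_weight mulr_sumr.
under eq_bigr => s _ do rewrite setD_covered_setU1.
rewrite (exchange_big_dep (mem (F :\: covered S))) /=; last first.
  by move=> s eta _; rewrite inE => /andP[].
apply: eq_bigr => eta etaD.
rewrite (eq_bigl (fun s => (s \in F) && ~~ adj eta s)) => [|s]; last by rewrite inE etaD.
by rewrite sum_non_nbhd exprS mulrA.
Qed.

Lemma uncovered_weight0 S : uncovered_weight S 0 = #|F :\: covered S|%:R.
Proof.
by rewrite /uncovered_weight (eq_bigr (fun=> 1)) ?sumr_const // => eta _; rewrite expr0.
Qed.

Lemma greedy_step S r : (0 < #|F|)%N ->
  exists2 s, s \in F & uncovered_weight (s |: S) r <= uncovered_weight S r.+1.
Proof. by move=> F0; apply: exists_le_mean; rewrite ?sum_uncovered_weight_setU1. Qed.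

Lemma greedy_cover_from (S0 : {set T}) r : (0 < #|F|)%N -> S0 \subset F ->
  exists S : {set T}, [/\ S \subset F, (#|S| <= #|S0| + r)%N &
                #|F :\: covered S|%:R <= uncovered_weight S0 r].
Proof.
move=> F0; elim: r S0 => [|r IH] S0 sS0F.
  by exists S0; rewrite addn0 uncovered_weight0.
have [s sF step] := greedy_step S0 r F0.
have [|S [sSF cardS wS]] := IH (s |: S0); first by rewrite subUset sub1set sF.
exists S; split => //; last exact: le_trans step.
by rewrite (leq_trans cardS) // cardsU1 addnS -addSn leq_add2r; case: (s \in S0).
Qed.

Lemma greedy_cover r : (0 < #|F|)%N ->
  exists S : {set T}, [/\ S \subset F, (#|S| <= r)%N &
    #|F|%:R - \sum_(eta in F) miss_prob eta ^+ r <= #|covered S|%:R].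
Proof.
move=> F0; have [S [sSF cardS wS]] := greedy_cover_from r F0 (sub0set F).
exists S; split => //; first by rewrite cards0 in cardS.
have cov0 : covered set0 = set0.
  by apply/setP => eta; rewrite !inE; apply/andP => -[_ /exists_inP[sigma]]; rewrite inE.
move: wS; rewrite /uncovered_weight cov0 setD0 cardsDS ?covered_sub // natrB.
  by move=> wS; lra.
by rewrite subset_leq_card ?covered_sub.
Qed.

End RandomGreedyCover.

Lemma setD_eq_set1 (T : finType) (x : T) (A B : {set T}) :
  B \subset x |: A -> (#|A| <= #|B|)%N -> B != A -> B :\: A = [set x].
Proof.
move=> sBxA leAB neBA; apply/eqP; rewrite eqEcard cards1.
have sub : B :\: A \subset [set x].
  apply/subsetP => y; rewrite !inE => /andP[yNA yB].
  by have := subsetP sBxA y yB; rewrite !inE (negbTE yNA) orbF.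
rewrite sub /= card_gt0; apply: contra neBA; rewrite setD_eq0 => sBA.
by rewrite eqEcard sBA.
Qed.

Section Hypergraph.
Variables (n k : nat) (F : {set {set 'I_n}}).
Hypothesis F_uniform : {in F, forall sigma : {set 'I_n}, #|sigma| = k}.

Definition adjacent : rel {set 'I_n} := fun eta sigma => #|eta :&: sigma| == k.-1.

Definition private_ext (eta : {set 'I_n}) : {set {set 'I_n}} :=
  [set tau : {set 'I_n} | (#|tau| == k.+1) &&
      ([set e in F | (e \subset tau) && (#|e| == k)] == [set eta])].

Lemma nbhd_of_not_private eta x : eta \in F -> x \notin eta ->
  x |: eta \notin private_ext eta -> exists2 e, e \in nbhd adjacent F eta & x \in e.
Proof.
move=> etaF xNeta; set P := [set e in F | (e \subset x |: eta) && (#|e| == k)].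
have etaP : eta \in P by rewrite !inE etaF subsetU1 F_uniform ?eqxx.
rewrite inE cardsU1 xNeta F_uniform // eqxx /= => neP.
have [P1|[e]] := set_0Vmem (P :\ eta).
  move: neP; rewrite eqEsubset -setD_eq0 P1 eqxx /=.
  by rewrite sub1set etaP.
rewrite !inE => /and4P[neeta eF sexeta /eqP ce].
have exeta : e :\: eta = [set x].
  by apply: setD_eq_set1; rewrite ?F_uniform ?ce.
have : x \in e :\: eta by rewrite exeta set11.
rewrite inE => /andP[_ xe].
exists e => //; rewrite !inE eF /adjacent setIC.
by have := cardsID eta e; rewrite exeta cards1 ce; lia.
Qed.

Lemma card_setC_le_beta_at_nbhd eta : eta \in F ->
  (#|~: eta| <= beta_at k F eta + #|nbhd adjacent F eta|)%N.
Proof.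
move=> etaF; set ext := [set x in ~: eta | x |: eta \in private_ext eta].
set diffs := [set e :\: eta | e in nbhd adjacent F eta].
have cover_compl : ~: eta \subset ext :|: cover diffs.
  apply/subsetP => x; rewrite inE => xNeta.
  rewrite in_setU /ext inE in_setC xNeta /=.
  case: (boolP (x |: eta \in private_ext eta)) => [//|].
  move=> /(nbhd_of_not_private etaF xNeta) [e eN xe].
  apply/bigcupP; exists (e :\: eta); first exact: imset_f.
  by rewrite inE xNeta.
apply: (leq_trans (subset_leq_card cover_compl)).
apply: (leq_trans (leq_card_setU _ _)); apply: leq_add.
  rewrite -(@card_in_imset _ _ (fun x => x |: eta)); last first.
    move=> x y; rewrite !inE => /andP[xNeta _] /andP[_ _] exy.
    by have := setU11 x eta; rewrite exy !inE (negbTE xNeta) orbF => /eqP.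
  by apply: subset_leq_card; apply/subsetP => _ /imsetP[x /[!inE] /andP[_ ?] ->].
apply: (leq_trans (leq_card_cover diffs)).
apply: (@leq_trans (\sum_(D in diffs) 1)); last by rewrite sum1_card leq_imset_card.
apply: leq_sum => _ /imsetP[e eN ->]; move: eN; rewrite !inE => /andP[eF adj].
by rewrite cardsD setIC (eqP adj) F_uniform //; lia.
Qed.

Lemma miss_prob_exprn_le (R : realType) (eps : R) s eta : eta \in F -> (k < n)%N ->
  expR (- (s%:R * ((n - k)%:R / #|F|%:R))) <= eps ->
  miss_prob R adjacent F eta ^+ s
    <= 1 - (1 - eps) * ((n - k - beta_at k F eta)%N%:R / (n - k)%:R).
Proof.
move=> etaF kn exp_le.
set L := (n - k)%N in exp_le *; set m := #|F| in exp_le *.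
set d := #|nbhd adjacent F eta|; set e := (L - beta_at k F eta)%N.
have L_gt0 : (0 : R) < L%:R by rewrite ltr0n subn_gt0.
have m_gt0 : (0 : R) < m%:R by rewrite ltr0n; apply/card_gt0P; exists eta.
have e_le_d : (e <= d)%N.
  have := card_setC_le_beta_at_nbhd etaF; have := cardsC eta.
  by rewrite card_ord F_uniform // /e /L; lia.
have d_le_m : (d <= m)%N.
  by apply: subset_leq_card; apply/subsetP => sigma; rewrite inE => /andP[].
apply: exprn_le_one_sub exp_le.
- by rewrite divr_ge0 ?ler0n //= ler_pdivrMr ?mul1r ?ler_nat ?leq_subr.
- by rewrite divr_ge0 ?ler0n.
- rewrite /miss_prob -/m -/d subr_ge0 ler_pdivrMr ?mul1r ?ler_nat //=.
  rewrite lerD2l lerN2 mulrA divfK ?lt0r_neq0 //.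
  by rewrite d_le_m ler_pM2r ?invr_gt0 // ler_nat.
Qed.

Lemma sum_miss_prob_exprn_le (R : realType) (eps theta : R) s : (k < n)%N ->
  0 <= eps <= 1 -> expR (- (s%:R * ((n - k)%:R / #|F|%:R))) <= eps ->
  (beta k F)%:R <= (1 - theta) * #|F|%:R * (n - k)%:R ->
  \sum_(eta in F) miss_prob R adjacent F eta ^+ s <= #|F|%:R - (1 - eps) * theta * #|F|%:R.
Proof.
move=> kn /andP[eps0 eps1] exp_le beta_le.
set L := (n - k)%N; pose e eta := (L - beta_at k F eta)%N.
have L_gt0 : (0 : R) < L%:R by rewrite ltr0n subn_gt0.
apply: (le_trans (ler_sum _ (fun eta etaF => miss_prob_exprn_le etaF kn exp_le))).
rewrite sumrB sumr_const -mulr_sumr -mulr_suml lerD2l lerN2 -mulrA.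
rewrite ler_wpM2l ?subr_ge0 // ler_pdivlMr //.
have : \sum_(eta in F) (L%:R - (beta_at k F eta)%:R) <= \sum_(eta in F) (e eta)%:R :> R.
  by apply: ler_sum => eta _; rewrite lerBlDr -natrD ler_nat /e; lia.
rewrite sumrB sumr_const -natr_sum -/(beta k F) -mulr_natl; lra.
Qed.

End Hypergraph.

Theorem claim3p2 (R : realType) (n k : nat) (F : {set {set 'I_n}})
  (eps theta : R) :
  (1 <= k)%N ->
  (forall sigma, sigma \in F -> #|sigma| = k) ->
  0 < eps -> eps <= 1 / 2 ->
  (n%:R > 2 * ln (1 / eps) + k%:R) ->
  0 < theta -> theta <= 1 ->
  (beta k F)%:R <= (1 - theta) * #|F|%:R * (n - k)%:R ->
  exists S : {set {set 'I_n}},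
    S \subset F /\
    (1 - eps) * theta * #|F|%:R <= #|Gamma k F S|%:R /\
    #|S|%:R < 20 * ln (1 / eps) * (#|F|%:R / (n - k)%:R)
              + 2 * ln (1 / (eps * theta)).
Proof.
move=> _ F_uniform eps_gt0 eps_le n_gt theta_gt0 theta_le1 beta_le.
have ln_eps := ln_inv_ge_half eps_gt0 eps_le.
have ln_eps_theta : 1 / 2 <= ln (1 / (eps * theta)).
  by apply: ln_inv_ge_half; rewrite ?mulr_gt0 //; nra.
have kn : (k < n)%N by rewrite -(ltr_nat R); lra.
have [F0|F_gt0] := posnP #|F|.
  by exists set0; rewrite sub0set F0 cards0 mul0r !mulr0 add0r ler0n; split => //; lra.
set L := (n - k)%N in beta_le *; set m := #|F| in beta_le F_gt0 *.
have L_gt0 : (0 : R) < L%:R by rewrite ltr0n subn_gt0.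
have m_gt0 : (0 : R) < m%:R by rewrite ltr0n.
set x := m%:R * ln (1 / eps) / L%:R; set s := (Num.truncn x).+1.
have x_gt0 : 0 < x by rewrite !mulr_gt0 ?invr_gt0 //; lra.
have exp_le : expR (- (s%:R * (L%:R / m%:R))) <= eps.
  apply: expRN_le => //; rewrite (_ : ln (1 / eps) = x * (L%:R / m%:R)).
    by rewrite ler_pM2r ?divr_gt0 // ltW // truncnS_gt.
  by rewrite /x; field; rewrite !lt0r_neq0.
have [S [sSF card_S cover_S]] := greedy_cover R (adjacent k) s F_gt0.
exists S; split; [done | split].
  have eps01 : 0 <= eps <= 1 by apply/andP; split; lra.
  by have := sum_miss_prob_exprn_le F_uniform kn eps01 exp_le beta_le; lra.
have s_le : s%:R <= x + 1 by rewrite -natr1 lerD2r truncn_le ltW.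
have -> : 20 * ln (1 / eps) * (m%:R / L%:R) = 20 * x.
  by rewrite /x; field; rewrite lt0r_neq0.
by have := ler_nat R #|S| s; rewrite card_S; lra.
Qed.
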